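(* Let $1\leq p<\infty$ and let $N>2$ be an integer. For each integer $i$ with $1\leq i\leq N$, let $T_i=T_{f_i,w^{(i)}}$ be the bilateral weighted pseudo-shift on $\ell^p(\mathbb{Z})$ induced by an invertible map $f_i:\mathbb{Z}\to\mathbb{Z}$ and a bounded nonzero weight sequence $w^{(i)}=(w^{(i)}_m)_{m\in\mathbb{Z}}$. For $m\in\mathbb{Z}$ and $n\in\mathbb{N}$ let $W^{(i)}_{m,n}=\prod_{v=1}^{n}w^{(i)}_{f_i^{v}(m)}$ and $W^{(i)}_{m,-n}=\prod_{v=0}^{n-1}w^{(i)}_{f_i^{-v}(m)}$. Suppose that there exists a strictly increasing sequence $(n_k)_{k\in\mathbb{N}}$ of positive integers such that: (a) for each integer $i$ with $1\leq i\leq N$ and each $m\in\mathbb{Z}$, $|W^{(i)}_{m,n_k}|\to\infty$ and $|W^{(i)}_{m,-n_k}|\to 0$ as $k\to\infty$; and (b) for each $\varepsilon>0$, integers $K,M\in\mathbb{N}$, and finite collection $\{a^{(i)}_j:-M\leq j\leq M,\ 1\leq i\leq N\}$ of nonzero scalars in $\mathbb{K}\setminus\{0\}$, there exists an integer $k\geq K$ such that for all integers $i,\ell$ with $1\leq i,\ell\leq N$ and $i\neq\ell$, \[\left|\frac{W^{(i)}_{f_i^{-n_k}(j),n_k}}{W^{(\ell)}_{f_\ell^{-n_k}(j),n_k}}\right|<\varepsilon\quad\text{whenever } j\in f_\ell^{n_k}([M])\cap f_i^{n_k}(\mathbb{Z}\setminus[M]),\] and \[\left|\frac{W^{(i)}_{f_i^{-n_k}(j),n_k}}{W^{(\ell)}_{f_\ell^{-n_k}(j),n_k}}-\frac{a^{(i)}_{f_i^{-n_k}(j)}}{a^{(\ell)}_{f_\ell^{-n_k}(j)}}\right|<\varepsilon\quad\text{whenever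 } j\in f_\ell^{n_k}([M])\cap f_i^{n_k}([M]),\] where $[M]=\{-M,-M+1,\dots,0,\dots,M\}$. Then $T_1,\dots,T_N$ satisfy the Disjoint Blow-up/Collapse Criterion. In particular, $T_1,\dots,T_N$ are disjoint hypercyclic.
   Context: $\mathbb{K}$ denotes the scalar field ($\mathbb{R}$ or $\mathbb{C}$); $(e_j)_{j\in\mathbb{Z}}$ is the canonical basis of $\ell^p(\mathbb{Z})$. Bilateral weighted pseudo-shift: given an invertible map $f:\mathbb{Z}\to\mathbb{Z}$ and a bounded nonzero weight sequence $w=(w_j)_{j\in\mathbb{Z}}$, $T_{f,w}\big(\sum_{j\in\mathbb{Z}}x_je_j\big)=\sum_{j\in\mathbb{Z}}w_{f(j)}x_{f(j)}e_j$; thus $T_{f,w}^n e_m=W_{m,-n}e_{f^{-n}(m)}$ and $T_{f,w}^n e_{f^n(m)}=W_{m,n}e_m$. Operators $T_1,\dots,T_N$ ($N\geq 2$) on a separable Banach space $X$ are disjoint hypercyclic if there is $x\in X$ such that $\{(T_1^nx,\dots,T_N^nx):n\in\mathbb{N}\}$ is dense in $X^N$. Disjoint Blow-up/Collapse Criterion: operators $T_1,\dots,T_N\in\mathcal{L}(X)$ ($N\ge 2$) satisfy it if there exist a strictly increasing sequence $(n_k)$ of positive integers, a dense subset $X_0\subset X$ and maps $S_k:\bigoplus_{i=1}^N X_0\to X$ such that (i) for each $x\in X_0$ and $1\leq i\leq N$, $T_i^{n_k}x\to 0$ as $k\to\infty$; (ii) for each $\varepsilon>0$, integer $K\in\mathbb{N}$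 and $x_1,\dots,x_N\in X_0$ there is an integer $k\geq K$ with $\|S_k(x_1,\dots,x_N)\|<\varepsilon$ and $\|T_i^{n_k}S_k(x_1,\dots,x_N)-x_i\|<\varepsilon$ for $1\leq i\leq N$. *)

From HB Require Import structures.
From mathcomp Require Import all_boot all_order all_algebra.
From mathcomp Require Import all_classical all_reals all_analysis.
From mathcomp Require Import complex.

Set Implicit Arguments.
Unset Strict Implicit.
Unset Printing Implicit Defensive.

Import Order.TTheory GRing.Theory Num.Theory.
Local Open Scope classical_set_scope.
Local Open Scope ring_scope.

Definition lp_mem (R : realType) (K : fieldType) (nrm : K -> R) (p : R)
  (x : int -> K) : Prop :=
  (\esum_(j in [set: int]) ((nrm (x j)) `^ p)%:E < +oo)%E.

Definition lp_norm (R : realType) (K : fieldType) (nrm : K -> R) (p : R)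
  (x : int -> K) : R :=
  (fine (\esum_(j in [set: int]) ((nrm (x j)) `^ p)%:E)) `^ p^-1.

Definition lp_sub (K : fieldType) (x y : int -> K) : int -> K :=
  fun j => x j - y j.

Definition lp_operator (R : realType) (K : fieldType) (nrm : K -> R) (p : R)
  (T : (int -> K) -> (int -> K)) : Prop :=
  (forall x, lp_mem nrm p x -> lp_mem nrm p (T x)) /\
  (forall (a : K) x y, lp_mem nrm p x -> lp_mem nrm p y ->
     T (fun j => a * x j + y j) = (fun j => a * T x j + T y j)) /\
  (exists C : R, forall x, lp_mem nrm p x ->
     lp_norm nrm p (T x) <= C * lp_norm nrm p x).

Definition pshift (K : fieldType) (f : int -> int) (w : int -> K)
  (x : int -> K) : int -> K :=
  fun j => w (f j) * x (f j).

Definition Wfwd (K : fieldType) (f : int -> int) (w : int -> K) (m : int)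
  (n : nat) : K :=
  \prod_(1 <= v < n.+1) w (iter v f m).

(** W_{m,-n} = prod_{v=0}^{n-1} w_{f^{-v}(m)}, where g = f^{-1} *)
Definition Wbwd (K : fieldType) (g : int -> int) (w : int -> K) (m : int)
  (n : nat) : K :=
  \prod_(0 <= v < n) w (iter v g m).

Definition inM (M : nat) (m : int) : Prop := (- (M%:Z) <= m <= M%:Z).

(** Disjoint Blow-up/Collapse Criterion for T_1,...,T_N on X = l^p(Z)
   (indices 1..N are represented by 'I_N = {0..N-1}). *)
Definition dBUC (R : realType) (K : fieldType) (nrm : K -> R) (p : R) (N : nat)
  (T : 'I_N -> (int -> K) -> (int -> K)) : Prop :=
  (2 <= N)%N /\ (forall i, lp_operator nrm p (T i)) /\
  exists (n : nat -> nat) (X0 : set (int -> K))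
         (S : nat -> ('I_N -> int -> K) -> int -> K),
    (forall k, (0 < n k)%N) /\ (forall k, (n k < n k.+1)%N) /\
    (forall x, X0 x -> lp_mem nrm p x) /\
    (forall x, lp_mem nrm p x -> forall e : R, 0 < e ->
       exists y, X0 y /\ lp_norm nrm p (lp_sub x y) < e) /\
    (forall k xs, (forall i, X0 (xs i)) -> lp_mem nrm p (S k xs)) /\
    (forall x, X0 x -> forall i,
       (fun k => lp_norm nrm p (iter (n k) (T i) x)) @ \oo --> 0) /\
    (forall e : R, 0 < e -> forall (K0 : nat) (xs : 'I_N -> int -> K),
       (forall i, X0 (xs i)) ->
       exists k, (K0 <= k)%N /\ lp_norm nrm p (S k xs) < e /\
         forall i, lp_norm nrm p (lp_sub (iter (n k) (T i) (S k xs)) (xs i)) < e).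

Definition dHC (R : realType) (K : fieldType) (nrm : K -> R) (p : R) (N : nat)
  (T : 'I_N -> (int -> K) -> (int -> K)) : Prop :=
  (2 <= N)%N /\ (forall i, lp_operator nrm p (T i)) /\
  exists x, lp_mem nrm p x /\
    forall ys : 'I_N -> int -> K, (forall i, lp_mem nrm p (ys i)) ->
    forall e : R, 0 < e ->
    exists m : nat, forall i, lp_norm nrm p (lp_sub (iter m (T i) x) (ys i)) < e.

Definition theorem2p4_for (R : realType) (K : fieldType) (nrm : K -> R) : Prop :=
  forall (p : R) (N : nat) (f g : 'I_N -> int -> int) (w : 'I_N -> int -> K)
         (n : nat -> nat),
  1 <= p -> (2 < N)%N ->
  (forall i, cancel (f i) (g i) /\ cancel (g i) (f i)) ->
  (forall i, exists B : R, forall m, nrm (w i m) <= B) ->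
  (forall i m, w i m != 0) ->
  (forall k, (0 < n k)%N) -> (forall k, (n k < n k.+1)%N) ->
  (forall i m, (fun k => nrm (Wfwd (f i) (w i) m (n k))) @ \oo --> +oo) ->
  (forall i m, (fun k => nrm (Wbwd (g i) (w i) m (n k))) @ \oo --> 0) ->
  (forall eps : R, 0 < eps -> forall (K0 M : nat) (a : 'I_N -> int -> K),
     (forall i j, inM M j -> a i j != 0) ->
     exists k, (K0 <= k)%N /\
       forall i l : 'I_N, i != l -> forall j : int,
         ((exists m, inM M m /\ iter (n k) (f l) m = j) /\
          (exists m, ~ inM M m /\ iter (n k) (f i) m = j) ->
          nrm (Wfwd (f i) (w i) (iter (n k) (g i) j) (n k) /
               Wfwd (f l) (w l) (iter (n k) (g l) j) (n k)) < eps) /\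
         ((exists m, inM M m /\ iter (n k) (f l) m = j) /\
          (exists m, inM M m /\ iter (n k) (f i) m = j) ->
          nrm (Wfwd (f i) (w i) (iter (n k) (g i) j) (n k) /
               Wfwd (f l) (w l) (iter (n k) (g l) j) (n k)
               - a i (iter (n k) (g i) j) / a l (iter (n k) (g l) j)) < eps)) ->
  dBUC nrm p (fun i => pshift (f i) (w i)) /\
  dHC nrm p (fun i => pshift (f i) (w i)).

(* The criterion is checked on finitely supported sequences. If x is supported
   in [M], the coordinates of T_i^(n_k) x are W^(i)_(m,-n_k) x_m, m in [M], which
   tend to 0 by (a). Given x_1, ..., x_N, the map S_k puts x_i(m) / W^(i)_(m,n_k)
   at f_i^(n_k)(m); this is small by (a), and T_l^(n_k) S_k x differs from x_l only
   by cross terms (W^(l) / W^(i)) x_i, which (b) makes small when applied to the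
   coefficients x_i themselves (zero coordinates replaced by a tiny scalar).

   Disjoint hypercyclicity is proved by a gliding hump: x = sum_r S_(k_r)(y_r),
   where (y_r) runs through a dense sequence of finitely supported N-tuples, each
   one infinitely often. Stage k_r is chosen so late that the new piece is
   supported off the earlier ones (by (a) no orbit of f_i is periodic, so orbits
   leave every finite set), that T_i^(n_(k_r)) almost kills the earlier pieces,
   and that the new piece is too small to be felt by T_i^(n_(k_s)), s < r.
   Disjoint supports let x be defined coordinatewise, so the scalar field need
   not be complete. *)

From HB Require Import structures.
From mathcomp Require Import all_boot all_order all_algebra.
From mathcomp Require Import all_classical all_reals all_analysis.
From mathcomp Require Import complex.
From mathcomp Require Import ring lra zify.

Set Implicit Arguments.
Unset Strict Implicit.
Unset Printing Implicit Defensive.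

Import Order.TTheory GRing.Theory Num.Theory.
Local Open Scope classical_set_scope.
Local Open Scope ring_scope.

Section ExtendedSums.
Variable R : realType.
Local Open Scope ereal_scope.

Lemma le_term_esum (T : choiceType) (a : T -> \bar R) t :
  (forall u, 0 <= a u) -> a t <= \esum_(u in [set: T]) a u.
Proof.
move=> a0; apply: esum_ge; exists [set t]; first by split => //; exact: finite_set1.
by rewrite fsbig_set1.
Qed.

Lemma esum_le_size_mul (T : choiceType) (A : seq T) (a : T -> \bar R) (c : R) :
  (0 <= c)%R -> (forall t, 0 <= a t) -> (forall t, t \notin A -> a t = 0) ->
  (forall t, a t <= c%:E) ->
  \esum_(t in [set: T]) a t <= ((size A)%:R * c)%:E.
Proof.
move=> c0 a0 aA ac.
pose delta (t u : T) := if u == t then c%:E else 0.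
have delta0 t u : 0 <= delta t u by rewrite /delta; case: ifP; rewrite ?lee_fin.
have esum_delta t : \esum_(u in [set: T]) delta t u = c%:E.
  rewrite -[RHS](@esum_set1 _ _ t (fun=> c%:E)) ?lee_fin // [RHS]esum_mkcond.
  by apply: eq_esum => u _; rewrite in_set1.
apply: (@le_trans _ _ (\esum_(u in [set: T]) \sum_(t <- A) delta t u)).
  apply: le_esum => u _; have [uA|uA] := boolP (u \in A); last first.
    by rewrite aA // sume_ge0.
  rewrite (big_rem u) //= {1}/delta eqxx (le_trans (ac u)) // leeDl //.
  exact: sume_ge0.
rewrite esum_sum //; under eq_bigr do rewrite esum_delta.
by rewrite sumEFin big_const_seq count_predT iter_addr_0 mulr_natl.
Qed.

Lemma exchange_esum (T1 T2 : choiceType) (a : T1 -> T2 -> \bar R) :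
  (forall i j, 0 <= a i j) ->
  \esum_(i in [set: T1]) \esum_(j in [set: T2]) a i j =
  \esum_(j in [set: T2]) \esum_(i in [set: T1]) a i j.
Proof.
move=> a0; rewrite (@esum_esum _ _ _ [set: T1] (fun _ => [set: T2])) //.
rewrite (@esum_esum _ _ _ [set: T2] (fun _ => [set: T1])) //.
rewrite (reindex_esum ([set: T2] `*`` (fun=> [set: T1]))
  ([set: T1] `*`` (fun=> [set: T2])) (fun x => (x.2, x.1))) //.
split; first by move=> [].
- by move=> [i1 i2] [j1 j2] _ _ [] -> ->.
- by move=> [i j] _; exists (j, i).
Qed.

Lemma esumZl_le (T : choiceType) (a : T -> \bar R) (c : R) :
  (0 <= c)%R -> (forall t, 0 <= a t) ->
  \esum_(t in [set: T]) (c%:E * a t) <= c%:E * \esum_(t in [set: T]) a t.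
Proof.
move=> c0 a0; apply: ge_ereal_sup => _ [X [finX _] <-] /=.
rewrite -ge0_mule_fsumr //; apply: lee_wpmul2l; first by rewrite lee_fin.
by apply: ereal_sup_ubound; exists X.
Qed.

Lemma esum_geometric_le (c : R) : (0 <= c)%R ->
  \esum_(s in [set: nat]) (c * 2^-1 ^+ s)%:E <= (2 * c)%:E.
Proof.
move=> c0; have h0 : (0 < 2^-1 :> R)%R by rewrite invr_gt0.
have ge0 s : 0 <= (c * 2^-1 ^+ s)%:E by rewrite lee_fin mulr_ge0 // exprn_ge0 // ltW.
rewrite -nneseries_esumT //; apply: lime_le.
  by apply: is_cvg_nneseries => s _.
apply: nearW => m; rewrite sumEFin lee_fin.
have h1 : (`|2^-1| < 1 :> R)%R by rewrite ger0_norm ?ltW // invf_lt1 ?ltr1n.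
have := @geometric_le_lim R m c 2^-1 c0 h0 h1.
by rewrite [X in (_ <= X)%R -> _](_ : _ = 2 * c)%R //; field.
Qed.

End ExtendedSums.

Lemma filter_forall_in (T : Type) (I : eqType) (F : set_system T) (s : seq I)
    (P : I -> T -> Prop) : Filter F ->
  (forall i, i \in s -> \forall x \near F, P i x) ->
  \forall x \near F, forall i, i \in s -> P i x.
Proof.
move=> FF; elim: s => [|a s IH] sP; first exact: nearW.
have aP := sP a (mem_head a s).
have {}IH := IH (fun i si => sP i (mem_behead (s := a :: s) si)).
apply: filterS (filterI aP IH) => x [Pa Ps] i.
by rewrite inE => /orP[/eqP->|/Ps].
Qed.

Lemma finite_family_bound (R : realDomainType) (I : finType) (T : Type)
    (F : I -> T -> R) :
  (forall i, exists B, forall t, F i t <= B) -> exists2 B, 1 <= B & forall i t, F i t <= B.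
Proof.
move=> /fin_all_exists[Bi FB]; have sum0 : 0 <= \sum_i `|Bi i| by apply: sumr_ge0.
exists (1 + \sum_i `|Bi i|) => [|i t]; first lra.
apply: (le_trans (FB i t)); apply: (le_trans (ler_norm _)).
by rewrite (bigD1 i) //= addrCA lerDl addr_ge0 ?sumr_ge0.
Qed.

Lemma iter_can (T : Type) (F G : T -> T) k : cancel F G -> cancel (iter k F) (iter k G).
Proof. by move=> FK; elim: k => [|k IH] x //; rewrite iterSr iterS FK IH. Qed.

Lemma iter_modn_period (T : Type) (F : T -> T) b q k :
  iter q F b = b -> iter k F b = iter (k %% q) F b.
Proof.
move=> Fq; rewrite {1}(divn_eq k q) addnC iterD; congr (iter _ F _).
by elim: (k %/ q)%N => [|a IH] //; rewrite mulSn iterD IH Fq.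
Qed.

Section PseudoShiftAlgebra.
Variable K : fieldType.
Implicit Types (F G : int -> int) (W : int -> K).

Lemma WfwdS F W m k : Wfwd F W m k.+1 = W (F m) * Wfwd F W (F m) k.
Proof.
rewrite /Wfwd big_nat_recl // /=; congr (_ * _).
by apply: eq_bigr => v _; rewrite -iterSr.
Qed.

Lemma iter_pshiftE F W k x :
  iter k (pshift F W) x = fun j => Wfwd F W j k * x (iter k F j).
Proof.
elim: k => [|k IH]; apply: funext => j /=; first by rewrite /Wfwd big_geq // mul1r.
by rewrite IH /pshift WfwdS -iterSr /= mulrA.
Qed.

Lemma Wfwd_Wbwd F G W m k : cancel F G ->
  Wfwd F W m k = Wbwd G W (iter k F m) k.
Proof.
move=> FK; elim: k m => [|k IH] m; first by rewrite /Wfwd /Wbwd !big_geq.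
rewrite WfwdS IH /Wbwd [in RHS]big_nat_recr // /= -iterSr mulrC; congr (_ * _).
by rewrite -iterS iterSr (iter_can k FK).
Qed.

Lemma Wfwd_neq0 F W m k : (forall m, W m != 0) -> Wfwd F W m k != 0.
Proof. by move=> W0; rewrite /Wfwd prodf_seq_neq0; apply/allP => v _; apply: W0. Qed.

End PseudoShiftAlgebra.

(** * p-th power sums on sequences indexed by Z *)

Section Lp.
Variables (R : realType) (K : fieldType) (nrm : K -> R) (p : R).
Hypothesis p_gt0 : 0 < p.
Hypothesis nrm0 : nrm 0 = 0.
Hypothesis nrm_ge0 : forall x, 0 <= nrm x.
Hypothesis nrm_eq0 : forall x, nrm x = 0 -> x = 0.
Hypothesis nrmM : forall x y, nrm (x * y) = nrm x * nrm y.
Hypothesis nrmD : forall x y, nrm (x + y) <= nrm x + nrm y.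
Hypothesis nrmN : forall x, nrm (- x) = nrm x.
Hypothesis nrm_small : forall e, 0 < e -> exists2 z, z != 0 & nrm z < e.

Definition pmass (v : int -> K) : \bar R :=
  \esum_(j in [set: int]) ((nrm (v j)) `^ p)%:E.

Lemma powR_nrm_ge0 x : (0 <= ((nrm x) `^ p)%:E)%E.
Proof. by rewrite lee_fin powR_ge0. Qed.

Lemma powR_nrm0 : (nrm 0) `^ p = 0.
Proof. by rewrite nrm0 powR0 // gt_eqF. Qed.

Lemma pmass_ge0 v : (0 <= pmass v)%E.
Proof. by apply: esum_ge0 => j _; apply: powR_nrm_ge0. Qed.

Lemma ler_powRp a b : 0 <= a -> a <= b -> a `^ p <= b `^ p.
Proof.
move=> a0 ab; apply: ge0_ler_powR; rewrite ?nnegrE //; first exact: ltW.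
exact: le_trans ab.
Qed.

Lemma powRpK a : 0 <= a -> (a `^ p) `^ p^-1 = a.
Proof. by move=> a0; rewrite -powRrM divff ?gt_eqF // powRr1. Qed.

Lemma lp_norm_lt e : 0 < e -> exists2 d, 0 < d &
  forall v, (pmass v <= d%:E)%E -> lp_norm nrm p v < e.
Proof.
move=> e0; exists ((e / 2) `^ p); first by rewrite powR_gt0 // divr_gt0.
move=> v hv; rewrite /lp_norm -/(pmass v).
have fin_v : pmass v \is a fin_num.
  by rewrite ge0_fin_numE ?pmass_ge0 // (le_lt_trans hv) // ltry.
have le_v : fine (pmass v) <= (e / 2) `^ p by rewrite -lee_fin fineK.
apply: (@le_lt_trans _ _ (((e / 2) `^ p) `^ p^-1)).
  apply: ge0_ler_powR; rewrite ?nnegrE ?powR_ge0 ?fine_ge0 ?pmass_ge0 //.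
  by rewrite invr_ge0 ltW.
rewrite powRpK; first lra.
by rewrite divr_ge0 // ltW.
Qed.

Lemma pmass_le_size (v : int -> K) (A : seq int) (rho : R) : 0 <= rho ->
  (forall j, v j != 0 -> j \in A) -> (forall j, nrm (v j) <= rho) ->
  (pmass v <= ((size A)%:R * rho `^ p)%:E)%E.
Proof.
move=> rho0 vA vrho; apply: esum_le_size_mul.
- exact: powR_ge0.
- by move=> j; apply: powR_nrm_ge0.
- by move=> j jA; rewrite (eqP (contraNT (vA j) jA)) powR_nrm0.
- by move=> j; rewrite lee_fin; apply: ler_powRp.
Qed.

Lemma pmass_small_coords (Z : nat) d : 0 < d -> exists2 rho, 0 < rho &
  forall v (A : seq int), (size A <= Z)%N -> (forall j, v j != 0 -> j \in A) ->
  (forall j, nrm (v j) <= rho) -> (pmass v <= d%:E)%E.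
Proof.
move=> d0; have Z0 : 0 < Z.+1%:R :> R by rewrite ltr0n.
exists ((d / Z.+1%:R) `^ p^-1); first by rewrite powR_gt0 // divr_gt0.
move=> v A sizeA vA vrho; apply: (le_trans (pmass_le_size _ vA vrho)).
  exact: powR_ge0.
have dZ0 : 0 <= d / Z.+1%:R by rewrite divr_ge0 // ltW.
rewrite -powRrM mulVf ?gt_eqF // powRr1 // lee_fin.
rewrite mulrA ler_pdivrMr // mulrC ler_wpM2l ?(ltW d0) // ler_nat.
by rewrite (leq_trans sizeA).
Qed.

Lemma pmass_split_le (u : int -> K) (a b : int -> \bar R) :
  (forall j, (0 <= a j)%E) -> (forall j, (0 <= b j)%E) ->
  (forall j, (((nrm (u j)) `^ p)%:E <= (2 `^ p)%:E * (a j + b j))%E) ->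
  (pmass u <= (2 `^ p)%:E *
     (\esum_(j in [set: int]) a j + \esum_(j in [set: int]) b j))%E.
Proof.
move=> a0 b0 h; apply: (le_trans (le_esum (fun j _ => h j))).
rewrite -esumD //; apply: esumZl_le; first exact: powR_ge0.
by move=> j; rewrite adde_ge0.
Qed.

Lemma powR_nrmD_le a b :
  (nrm (a + b)) `^ p <= 2 `^ p * ((nrm a) `^ p + (nrm b) `^ p).
Proof.
have le_max2 : nrm (a + b) <= 2 * Num.max (nrm a) (nrm b).
  apply: (le_trans (nrmD a b)).
  have := le_max (nrm a) (nrm a) (nrm b); have := le_max (nrm b) (nrm a) (nrm b).
  rewrite !lexx orbT /= => h1 h2; lra.
apply: (le_trans (ler_powRp (nrm_ge0 _) le_max2)).
rewrite powRM ?ler0n ?le_max ?nrm_ge0 //.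
apply: ler_wpM2l; first exact: powR_ge0.
by case: (leP (nrm a) (nrm b)) => _; rewrite ?lerDr ?lerDl powR_ge0.
Qed.

Lemma pmassD_le (u a b : int -> K) : (forall j, u j = a j + b j) ->
  (pmass u <= (2 `^ p)%:E * (pmass a + pmass b))%E.
Proof.
move=> uE; apply: pmass_split_le => [j|j|j]; try exact: powR_nrm_ge0.
by rewrite uE -EFinD -EFinM lee_fin powR_nrmD_le.
Qed.

Definition window (M : nat) : seq int :=
  [seq (t%:Z - M%:Z) | t <- iota 0 (M + M).+1].

Lemma size_window M : size (window M) = (M + M).+1.
Proof. by rewrite size_map size_iota. Qed.

Lemma mem_window M j : inM M j -> j \in window M.
Proof.
rewrite /inM => /andP[h1 h2]; apply/mapP; exists (absz (j + M%:Z)).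
  by rewrite mem_iota add0n ltnS -lez_nat abszE ger0_norm; lia.
by rewrite abszE ger0_norm; lia.
Qed.

Lemma inM_dec M j : inM M j \/ ~ inM M j.
Proof. by rewrite /inM; case: (_ <= _ <= _); [left | right]. Qed.

Lemma inM_seq (A : seq int) : exists M : nat, forall j, j \in A -> inM M j.
Proof.
exists (\sum_(j <- A) absz j)%N => j jA; rewrite /inM -ler_norml.
rewrite -abszE lez_nat (big_rem j) //=; exact: leq_addr.
Qed.

Definition finsupp (v : int -> K) := exists M : nat, forall j, ~ inM M j -> v j = 0.

Lemma support_inM (v : int -> K) M j :
  (forall j, ~ inM M j -> v j = 0) -> v j != 0 -> inM M j.
Proof. by move=> vM; apply: contra_neqT => /negP/vM. Qed.

Lemma finsupp_seq (v : int -> K) (A : seq int) :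
  (forall j, v j != 0 -> j \in A) -> finsupp v.
Proof.
move=> vA; have [M AM] := inM_seq A; exists M => j jM.
by have [//|/vA/AM] := eqVneq (v j) 0.
Qed.

Lemma finsupp_common_window (I : finType) (xs : I -> int -> K) :
  (forall i, finsupp (xs i)) -> exists M, forall i j, ~ inM M j -> xs i j = 0.
Proof.
move=> /fin_all_exists[Mi xsMi]; exists (\max_i Mi i) => i j jM.
apply: xsMi => jMi; apply: jM; move: jMi; rewrite /inM.
have := leq_bigmax (F := Mi) i; lia.
Qed.

Lemma finsupp_coord_bound (v : int -> K) M : (forall j, ~ inM M j -> v j = 0) ->
  exists X, forall j, nrm (v j) <= X.
Proof.
move=> vM; exists (\sum_(t <- window M) nrm (v t)) => j.
have [->|vj] := eqVneq (v j) 0; first by rewrite nrm0 sumr_ge0.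
have jW : j \in window M by apply/mem_window/(support_inM vM).
by rewrite (big_rem j jW) /= lerDl sumr_ge0.
Qed.

Lemma finsupp_lp_mem v : finsupp v -> lp_mem nrm p v.
Proof.
move=> [M vM]; have [X vX] := finsupp_coord_bound vM.
rewrite /lp_mem -/(pmass v); apply: le_lt_trans (ltry _).
apply: pmass_le_size (le_trans (nrm_ge0 _) (vX 0)) _ vX => j vj.
exact/mem_window/(support_inM vM).
Qed.

Definition trunc (M : nat) (v : int -> K) : int -> K :=
  fun j => if (- (M%:Z) <= j <= M%:Z) then v j else 0.

Lemma finsupp_trunc M v : finsupp (trunc M v).
Proof. by exists M => j; rewrite /trunc /inM => /negP/negbTE ->. Qed.

Lemma pmass_tail_small v : lp_mem nrm p v -> forall e, 0 < e ->
  exists M : nat, forall M', (M <= M')%N -> (pmass (lp_sub v (trunc M' v)) <= e%:E)%E.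
Proof.
rewrite /lp_mem -/(pmass v) => vfin e e0.
have fin_v : pmass v \is a fin_num by rewrite ge0_fin_numE ?pmass_ge0.
have vE : pmass v = (fine (pmass v))%:E by rewrite fineK.
have : ((fine (pmass v) - e)%:E < pmass v)%E by rewrite {2}vE lte_fin; lra.
move=> /ereal_sup_gt[_ [X [finX _] <-]] ltX.
have [M XM] : exists M : nat, forall j, X j -> inM M j.
  move: finX => /finite_fsetP[F ->]; have [M FM] := inM_seq (finmap.enum_fset F).
  by exists M => j /= jF; apply: FM.
exists M => M' MM'; set B := [set j : int | inM M' j].
have tailE : pmass (lp_sub v (trunc M' v)) =
    \esum_(j in [set: int] `&` ~` B) ((nrm (v j)) `^ p)%:E.
  rewrite /pmass (esumID B) ?(esum1 (D := [set: int] `&` B)); last first.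
  - by move=> j _; apply: powR_nrm_ge0.
  - by move=> j [_ /= jB]; rewrite /lp_sub /trunc; move: jB; rewrite /inM => ->;
      rewrite subrr powR_nrm0.
  rewrite add0e; apply: eq_esum => j [_ /= jB].
  by rewrite /lp_sub /trunc; move: jB; rewrite /inM => /negP/negbTE ->; rewrite subr0.
rewrite tailE leNgt; apply/negP => lt_tail.
have le_head : (\sum_(j \in X) ((nrm (v j)) `^ p)%:E <=
    \esum_(j in [set: int] `&` B) ((nrm (v j)) `^ p)%:E)%E.
  apply: esum_ge; exists X => //; split => // j /XM; rewrite /B /inM /=; lia.
have := lteD (lt_le_trans ltX le_head) lt_tail.
rewrite -(esumID B) -/(pmass v); last by move=> j _; apply: powR_nrm_ge0.
by rewrite -EFinD subrK -vE ltxx.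
Qed.

Lemma finsupp_dense x : lp_mem nrm p x -> forall e, 0 < e ->
  exists y, finsupp y /\ lp_norm nrm p (lp_sub x y) < e.
Proof.
move=> x_lp e e0; have [d d0 small] := lp_norm_lt e0.
have [M xM] := pmass_tail_small x_lp d0.
by exists (trunc M x); split; [exact: finsupp_trunc | exact/small/xM].
Qed.

Lemma pmass_reindex (v : int -> K) (h hi : int -> int) :
  cancel h hi -> cancel hi h -> pmass (fun j => v (h j)) = pmass v.
Proof.
move=> hK hiK; rewrite /pmass [RHS](reindex_esum [set: int] [set: int] h) //.
split => //; first by move=> i j _ _; apply: (can_inj hK).
by move=> j _; exists (hi j).
Qed.

Lemma pmass_pshift_le (f g : int -> int) (w : int -> K) (B : R) (v : int -> K) :
  cancel f g -> cancel g f -> 0 <= B -> (forall m, nrm (w m) <= B) ->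
  (pmass (pshift f w v) <= (B `^ p)%:E * pmass v)%E.
Proof.
move=> fK gK B0 wB; rewrite -(pmass_reindex v fK gK).
apply: (le_trans _ (@esumZl_le _ _ (fun j => ((nrm (v (f j))) `^ p)%:E) (B `^ p)
  (powR_ge0 _ _) (fun j => powR_nrm_ge0 _))).
apply: le_esum => j _; rewrite /pshift -EFinM lee_fin nrmM powRM //.
by apply: ler_wpM2r; [exact: powR_ge0 | apply: ler_powRp].
Qed.

Lemma pmass_iter_pshift_le (f g : int -> int) (w : int -> K) (B : R) v k :
  cancel f g -> cancel g f -> 0 <= B -> (forall m, nrm (w m) <= B) ->
  (pmass (iter k (pshift f w) v) <= ((B `^ p) ^+ k)%:E * pmass v)%E.
Proof.
move=> fK gK B0 wB; elim: k => [|k IH]; first by rewrite expr0 mul1e.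
rewrite iterS; apply: (le_trans (pmass_pshift_le _ fK gK B0 wB)).
rewrite exprS EFinM -muleA; apply: lee_wpmul2l => //.
by rewrite lee_fin powR_ge0.
Qed.

Lemma pshift_lp_operator (f g : int -> int) (w : int -> K) :
  cancel f g -> cancel g f -> (exists B : R, forall m, nrm (w m) <= B) ->
  lp_operator nrm p (pshift f w).
Proof.
move=> fK gK [B0 wB0]; set B := Num.max B0 0.
have B0p : 0 <= B by rewrite le_max lexx orbT.
have wB m : nrm (w m) <= B by rewrite le_max wB0.
have Tle v := pmass_pshift_le v fK gK B0p wB.
have Tfin v : lp_mem nrm p v -> pmass (pshift f w v) \is a fin_num.
  rewrite /lp_mem -/(pmass v) => vfin.
  rewrite ge0_fin_numE ?pmass_ge0 //; apply: (le_lt_trans (Tle v)).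
  by rewrite -(fineK (_ : pmass v \is a fin_num)) ?ge0_fin_numE ?pmass_ge0 // -EFinM ltry.
split; [|split].
- by move=> v /Tfin; rewrite /lp_mem -/(pmass _) ge0_fin_numE ?pmass_ge0.
- by move=> a x y _ _; apply: funext => j; rewrite /pshift; ring.
exists (B `^ p `^ p^-1) => x x_lp; rewrite /lp_norm -!/(pmass _).
have fin_x : pmass x \is a fin_num by rewrite ge0_fin_numE ?pmass_ge0.
have le_fine : fine (pmass (pshift f w x)) <= B `^ p * fine (pmass x).
  by rewrite -lee_fin EFinM !fineK ?Tfin.
apply: (le_trans (y := (B `^ p * fine (pmass x)) `^ p^-1)).
  apply: ge0_ler_powR; rewrite ?nnegrE ?mulr_ge0 ?powR_ge0 ?fine_ge0 ?pmass_ge0 //.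
  by rewrite invr_ge0 ltW.
by rewrite powRM ?powR_ge0 ?fine_ge0 ?pmass_ge0.
Qed.

Lemma nrm1 : nrm 1 = 1.
Proof.
have n1 : nrm 1 != 0 by apply/eqP => /nrm_eq0 /eqP; rewrite oner_eq0.
by apply: (mulfI n1); rewrite -nrmM !mulr1.
Qed.

Lemma nrmV x : nrm x^-1 = (nrm x)^-1.
Proof.
have [->|x0] := eqVneq x 0; first by rewrite invr0 nrm0 invr0.
have nx : nrm x != 0 by apply/eqP => /nrm_eq0 /eqP; rewrite (negbTE x0).
by apply: (mulfI nx); rewrite -nrmM !divff // nrm1.
Qed.

Lemma nrm_div x y : nrm (x / y) = nrm x / nrm y.
Proof. by rewrite nrmM nrmV. Qed.

(** * The disjoint blow-up/collapse criterion *)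

Section Criterion.
Variables (N : nat) (f g : 'I_N -> int -> int) (w : 'I_N -> int -> K) (n : nat -> nat).
Hypothesis fgK : forall i, cancel (f i) (g i) /\ cancel (g i) (f i).
Hypothesis w_neq0 : forall i m, w i m != 0.
Hypothesis W_blowup :
  forall i m, (fun k => nrm (Wfwd (f i) (w i) m (n k))) @ \oo --> +oo.
Hypothesis W_collapse :
  forall i m, (fun k => nrm (Wbwd (g i) (w i) m (n k))) @ \oo --> 0.

Definition ratio_control (eps : R) (M : nat) (a : 'I_N -> int -> K) (k : nat) :=
  forall i l : 'I_N, i != l -> forall j : int,
    ((exists m, inM M m /\ iter (n k) (f l) m = j) /\
     (exists m, ~ inM M m /\ iter (n k) (f i) m = j) ->
     nrm (Wfwd (f i) (w i) (iter (n k) (g i) j) (n k) /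
          Wfwd (f l) (w l) (iter (n k) (g l) j) (n k)) < eps) /\
    ((exists m, inM M m /\ iter (n k) (f l) m = j) /\
     (exists m, inM M m /\ iter (n k) (f i) m = j) ->
     nrm (Wfwd (f i) (w i) (iter (n k) (g i) j) (n k) /
          Wfwd (f l) (w l) (iter (n k) (g l) j) (n k)
          - a i (iter (n k) (g i) j) / a l (iter (n k) (g l) j)) < eps).

Hypothesis ratio_hyp : forall eps : R, 0 < eps -> forall (K0 M : nat) a,
  (forall i j, inM M j -> a i j != 0) ->
  exists k, (K0 <= k)%N /\ ratio_control eps M a k.

Let T i := pshift (f i) (w i).

(* At j = f_i^(n_k)(m) we serve only the first i with x_i(m) != 0; condition (b)
   makes the other operators T_l, l != i, see approximately x_l there too. *)
Definition Smap k (xs : 'I_N -> int -> K) : int -> K := fun j =>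
  match [pick i | xs i (iter (n k) (g i) j) != 0] with
  | Some i => xs i (iter (n k) (g i) j) / Wfwd (f i) (w i) (iter (n k) (g i) j) (n k)
  | None => 0
  end.

Definition Smap_support k M : seq int :=
  flatten [seq [seq iter (n k) (f i) m | m <- window M] | i <- enum 'I_N].

Lemma size_Smap_support k M : size (Smap_support k M) = (N * (M + M).+1)%N.
Proof.
rewrite /Smap_support size_flatten /shape -map_comp -(size_window M).
rewrite -[X in (X * _)%N](size_enum_ord N).
by elim: (enum 'I_N) => [|i s IH] //=; rewrite IH size_map mulSn.
Qed.

Lemma Smap_supp k xs M : (forall i j, ~ inM M j -> xs i j = 0) ->
  forall j, Smap k xs j != 0 -> j \in Smap_support k M.
Proof.
move=> xsM j; rewrite /Smap; case: pickP => [i xi _|_]; last by rewrite eqxx.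
apply/flatten_mapP; exists i; first by rewrite mem_enum.
apply/mapP; exists (iter (n k) (g i) j).
  exact/mem_window/(support_inM (xsM i)).
by rewrite (iter_can _ (fgK i).2).
Qed.

Lemma finsupp_Smap k xs : (forall i, finsupp (xs i)) -> finsupp (Smap k xs).
Proof.
move=> /finsupp_common_window[M xsM]; exact: finsupp_seq (Smap_supp xsM).
Qed.

Lemma Smap_coord_le k xs M X rho :
  (forall i j, ~ inM M j -> xs i j = 0) -> (forall i j, nrm (xs i j) <= X) -> 0 < rho ->
  (forall i m, inM M m -> X / rho <= nrm (Wfwd (f i) (w i) m (n k))) ->
  forall j, nrm (Smap k xs j) <= rho.
Proof.
move=> xsM xsX rho0 Wlarge j; rewrite /Smap; case: pickP => [i xi|_]; last first.
  by rewrite nrm0 ltW.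
set m := iter (n k) (g i) j.
have W0 : 0 < nrm (Wfwd (f i) (w i) m (n k)).
  rewrite lt_neqAle nrm_ge0 andbT eq_sym; apply/eqP => /nrm_eq0/eqP.
  exact/negP/Wfwd_neq0.
rewrite nrm_div ler_pdivrMr // (le_trans (xsX i m)) // mulrC -ler_pdivrMr //.
exact/Wlarge/(support_inM (xsM i)).
Qed.

Lemma Smap_error_coord_le k xs M X eta eps l j :
  (forall i j, ~ inM M j -> xs i j = 0) -> (forall i j, nrm (xs i j) <= X) ->
  0 <= eps -> ratio_control eps M (fun i j => if xs i j != 0 then xs i j else eta) k ->
  nrm (lp_sub (iter (n k) (T l) (Smap k xs)) (xs l) j) <= eps * X + nrm eta.
Proof.
move=> xsM xsX eps0 ratio.
have err0 : 0 <= eps * X + nrm eta.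
  by rewrite addr_ge0 ?mulr_ge0 // (le_trans (nrm_ge0 (xs l j))).
rewrite /lp_sub iter_pshiftE /Smap; set t := iter (n k) (f l) j.
have gt : iter (n k) (g l) t = j by rewrite (iter_can _ (fgK l).1).
case: pickP => [i xi|none]; last first.
  by have := none l; rewrite gt => /negbFE/eqP ->; rewrite mulr0 subrr nrm0.
have [->|il] := eqVneq i l.
  by rewrite gt mulrCA divff ?Wfwd_neq0 // mulr1 subrr nrm0.
set m := iter (n k) (g i) t.
have mM : inM M m by apply: (support_inM (xsM i)).
have fm : iter (n k) (f i) m = t by rewrite /m (iter_can _ (fgK i).2).
have Wi0 : Wfwd (f i) (w i) m (n k) != 0 by apply: Wfwd_neq0.
have li : l != i by rewrite eq_sym.
have [outside inside] := ratio l i li t; rewrite gt -/m xi in outside inside.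
have from_m : exists m', inM M m' /\ iter (n k) (f i) m' = t by exists m.
have [jM|jM] := inM_dec M j; last first.
  have := outside (conj from_m (ex_intro _ j (conj jM erefl))) => lt.
  rewrite (xsM l j jM) subr0 mulrA mulrAC nrmM.
  have := ler_pM (nrm_ge0 _) (nrm_ge0 _) (ltW lt) (xsX i m).
  have := nrm_ge0 eta; lra.
have := inside (conj from_m (ex_intro _ j (conj jM erefl))) => lt.
set a := if xs l j != 0 then xs l j else eta in lt *.
have -> : Wfwd (f l) (w l) j (n k) * (xs i m / Wfwd (f i) (w i) m (n k)) - xs l j =
    (Wfwd (f l) (w l) j (n k) / Wfwd (f i) (w i) m (n k) - a / xs i m) * xs i m
    + (a - xs l j) by field; rewrite xi Wi0.
have a_err : nrm (a - xs l j) <= nrm eta.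
  rewrite /a; have [->|xl] := eqVneq (xs l j) 0; first by rewrite subr0.
  by rewrite subrr nrm0.
have := ler_pM (nrm_ge0 _) (nrm_ge0 _) (ltW lt) (xsX i m).
have := nrmD ((Wfwd (f l) (w l) j (n k) / Wfwd (f i) (w i) m (n k) - a / xs i m) * xs i m)
  (a - xs l j).
rewrite nrmM; lra.
Qed.

Lemma Smap_approx xs M K0 d :
  (forall i j, ~ inM M j -> xs i j = 0) -> 0 < d ->
  exists k, [/\ (K0 <= k)%N, (pmass (Smap k xs) <= d%:E)%E &
    forall l, (pmass (lp_sub (iter (n k) (T l) (Smap k xs)) (xs l)) <= d%:E)%E].
Proof.
move=> xsM d0; have [X X1 xsX] := finite_family_bound
  (F := fun i j => nrm (xs i j)) (fun i => finsupp_coord_bound (xsM i)).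
have X0 : 0 < X by apply: lt_le_trans ltr01 X1.
have [rho rho0 small] := pmass_small_coords ((M + M).+1 + N * (M + M).+1) d0.
have [eta eta0 eta_small] := nrm_small (divr_gt0 rho0 (ltr0Sn R 1)).
set eps := rho / (2 * X).
have eps0 : 0 < eps by rewrite divr_gt0 // mulr_gt0.
have epsX : eps * X = rho / 2 by rewrite /eps; field; rewrite gt_eqF.
pose a i j := if xs i j != 0 then xs i j else eta.
have a0 i j : inM M j -> a i j != 0 by rewrite /a; case: ifP.
have Wlarge : \forall k \near \oo, forall i m, m \in window M ->
    X / rho <= nrm (Wfwd (f i) (w i) m (n k)).
  apply: filter_forall => i; apply: filter_forall_in => m _.
  exact: cvgry_ge (W_blowup i m) (X / rho).
have [K1 _ Wlarge_from] := Wlarge.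
have [k [Kk ratio]] := ratio_hyp eps0 (maxn K0 K1) a0.
have Wk := Wlarge_from k (leq_trans (leq_maxr K0 K1) Kk).
exists k; split; first exact: leq_trans (leq_maxl K0 K1) Kk.
  apply: (small _ (Smap_support k M)); first by rewrite size_Smap_support leq_addl.
    exact: Smap_supp.
  by apply: Smap_coord_le xsM xsX rho0 _ => i m /mem_window; apply: Wk.
move=> l; apply: (small _ (window M ++ map (iter (n k) (g l)) (Smap_support k M))).
  by rewrite size_cat size_map size_Smap_support size_window.
- move=> j; rewrite /lp_sub iter_pshiftE mem_cat => err_j.
  have [jM|jM] := inM_dec M j; first by rewrite mem_window.
  apply/orP; right; apply/mapP; exists (iter (n k) (f l) j).
    apply: (Smap_supp xsM); apply: contra_neq err_j => ->.
    by rewrite mulr0 xsM // subrr.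
  by rewrite (iter_can _ (fgK l).1).
- move=> j; apply: (le_trans (Smap_error_coord_le _ _ xsM xsX (ltW eps0) ratio)).
  by rewrite epsX; lra.
Qed.

Lemma pmass_Tpow_small i x d : finsupp x -> 0 < d ->
  \forall k \near \oo, (pmass (iter (n k) (T i) x) <= d%:E)%E.
Proof.
move=> [M xM] d0; have [X xX] := finsupp_coord_bound xM.
have X1 : 0 < X + 1 by have := le_trans (nrm_ge0 _) (xX 0); lra.
have [rho rho0 small] := pmass_small_coords (M + M).+1 d0.
have Wsmall : \forall k \near \oo, forall m, m \in window M ->
    nrm (Wbwd (g i) (w i) m (n k)) <= rho / (X + 1).
  apply: filter_forall_in => m _.
  apply: filterS (cvgr0_norm_le _ (W_collapse i m) _ (divr_gt0 rho0 X1)) => k.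
  by rewrite ger0_norm.
apply: filterS Wsmall => k Wk.
apply: (small _ (map (iter (n k) (g i)) (window M))); first by rewrite size_map size_window.
  move=> j; rewrite iter_pshiftE => Tx_j; apply/mapP.
  exists (iter (n k) (f i) j); last by rewrite (iter_can _ (fgK i).1).
  apply/mem_window/(support_inM xM); apply: contra_neq Tx_j => ->; exact: mulr0.
move=> j; rewrite iter_pshiftE nrmM (Wfwd_Wbwd _ _ _ (fgK i).1).
have [x0|xj] := eqVneq (x (iter (n k) (f i) j)) 0; first by rewrite x0 nrm0 mulr0 ltW.
have := ler_pM (nrm_ge0 _) (nrm_ge0 _)
  (Wk _ (mem_window (support_inM xM xj))) (xX (iter (n k) (f i) j)).
move/le_trans; apply; rewrite mulrAC ler_pdivrMr // ler_wpM2l ?(ltW rho0) //; lra.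
Qed.

Hypothesis w_bounded : forall i, exists B : R, forall m, nrm (w i m) <= B.
Hypothesis n_gt0 : forall k, (0 < n k)%N.
Hypothesis n_lt : forall k, (n k < n k.+1)%N.
Hypothesis N_ge2 : (2 <= N)%N.

Theorem pshift_dBUC : dBUC nrm p T.
Proof.
have T_op i : lp_operator nrm p (T i).
  by apply: pshift_lp_operator (w_bounded i); [exact: (fgK i).1 | exact: (fgK i).2].
split => //; split => //; exists n, finsupp, Smap.
split; first exact: n_gt0.
split; first exact: n_lt.
split; first exact: finsupp_lp_mem.
split; first exact: finsupp_dense.
split; first by move=> k xs xs_fin; apply/finsupp_lp_mem/finsupp_Smap.
split.
  move=> x x_fin i; apply/cvgrPdist_lt => e e0.
  have [d d0 small] := lp_norm_lt e0.
  apply: filterS (pmass_Tpow_small i x_fin d0) => k /small.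
  by rewrite sub0r normrN ger0_norm // powR_ge0.
move=> e e0 K0 xs xs_fin.
have [M xsM] := finsupp_common_window xs_fin.
have [d d0 small] := lp_norm_lt e0.
have [k [K0k S_small approx]] := Smap_approx K0 xsM d0.
by exists k; split => //; split; [exact: small | move=> i; exact: small].
Qed.

(** * Disjoint hypercyclicity *)

(* If f_i^q b = b, then W_(b,n_k) = W_(f_i^(n_k mod q) b, -n_k) would tend to 0. *)
Lemma orbit_not_periodic i b q : (0 < q)%N -> iter q (f i) b != b.
Proof.
move=> q0; apply/eqP => period.
have half0 : 0 < 2^-1 :> R by rewrite invr_gt0.
have Wb_small : \forall k \near \oo, forall s, s \in iota 0 q ->
    nrm (Wbwd (g i) (w i) (iter s (f i) b) (n k)) <= 2^-1.
  apply: filter_forall_in => s _.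
  apply: filterS (cvgr0_norm_le _ (W_collapse i (iter s (f i) b)) _ half0) => k.
  by rewrite ger0_norm.
have [K1 _ small_large] := filterI Wb_small (cvgry_ge (W_blowup i b) 1).
have [small large] := small_large K1 (leqnn K1).
move: large; rewrite (Wfwd_Wbwd _ _ _ (fgK i).1) (iter_modn_period _ period).
have := small ((n K1) %% q)%N; rewrite mem_iota add0n ltn_mod q0 => /(_ isT) le_half.
have : 2^-1 < 1 :> R by rewrite invf_lt1 // ltr1n.
move=> /(le_lt_trans le_half); rewrite ltNge => /negP; exact.
Qed.

Lemma n_homo : {homo n : a b / (a <= b)%N}.
Proof. exact: homo_leq leqnn leq_trans (fun k => ltnW (n_lt k)). Qed.

Lemma near_iter_neq i m b : \forall k \near \oo, iter (n k) (f i) m != b.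
Proof.
have [[k0 hit]|never] := pselect (exists k0, iter (n k0) (f i) m = b); last first.
  by apply: nearW => k; apply/eqP => hit; apply: never; exists k.
apply: filterS (nbhs_infty_gt k0) => k /= k0k; apply/eqP => hit'.
have nlt : (n k0 < n k)%N by apply: (homo_ltn (@ltn_trans) n_lt).
have := orbit_not_periodic i b (q := (n k - n k0)%N); rewrite subn_gt0 => /(_ nlt).
by rewrite -{1}hit -iterD subnK ?(ltnW nlt) // hit' eqxx.
Qed.

Variable c : nat -> K.
Hypothesis c_dense : forall z e, 0 < e -> exists t, nrm (z - c t) < e.

Definition tuple_of_code (cd : nat * seq (seq nat)) : 'I_N -> int -> K :=
  let: (M, L) := cd in fun i j =>
    if - (M%:Z) <= j <= M%:Z then c (nth 0%N (nth [::] L i) (absz (j + M%:Z))) else 0.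

(* logn 2 r.+1 takes every value infinitely often, so every code is a target at
   arbitrarily late stages r. *)
Definition target_code r : option (nat * seq (seq nat)) := unpickle (logn 2 r.+1).

Definition target r : 'I_N -> int -> K :=
  if target_code r is Some cd then tuple_of_code cd else fun _ _ => 0.

Definition target_radius r : nat := if target_code r is Some (M, _) then M else 0%N.

Lemma target_supp r i j : ~ inM (target_radius r) j -> target r i j = 0.
Proof.
rewrite /target /target_radius; case: (target_code r) => [[M L]|] //= jM.
by rewrite ifF //; apply/negP.
Qed.

Lemma target_dense (ys : 'I_N -> int -> K) : (forall i, lp_mem nrm p (ys i)) ->
  forall eps, 0 < eps -> forall r0, exists r, (r0 <= r)%N /\
  forall i, (pmass (lp_sub (target r i) (ys i)) <= eps%:E)%E.
Proof.
move=> ys_lp eps eps0 r0; have eps2 : 0 < eps / 2 by rewrite divr_gt0.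
have [Mi tail] := fin_all_exists (fun i => pmass_tail_small (ys_lp i) eps2).
pose M := \max_i Mi i.
have [rho rho0 small] := pmass_small_coords (M + M).+1 eps2.
pose idx (z : K) : nat := xget 0%N [set t | nrm (z - c t) < rho].
have idxP z : nrm (z - c (idx z)) < rho by apply: (xgetPex 0%N (c_dense z rho0)).
pose L := [seq [seq idx (ys i (t%:Z - M%:Z)) | t <- iota 0 (M + M).+1] | i <- enum 'I_N].
pose a := pickle (M, L).
have pos : (0 < 2 ^ a * r0.*2.+1)%N by rewrite muln_gt0 expn_gt0.
exists (2 ^ a * r0.*2.+1).-1%N; split.
  rewrite -ltnS prednK //; apply: (leq_trans _ (leq_pmull _ (expn_gt0 2 a))).
  by rewrite ltnS -addnn leq_addr.
have codeE : target_code (2 ^ a * r0.*2.+1).-1 = Some (M, L).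
  rewrite /target_code prednK // lognM ?expn_gt0 // pfactorK // logn_coprime.
    by rewrite addn0 pickleK.
  by rewrite coprime2n /= odd_double.
move=> i; rewrite /target codeE /=.
set u := lp_sub _ _.
pose inside := trunc M u.
have splitE : (pmass u = pmass inside + pmass (lp_sub (ys i) (trunc M (ys i))))%E.
  rewrite /pmass -esumD; try by move=> j _; apply: powR_nrm_ge0.
  apply: eq_esum => j _; rewrite /inside /u /lp_sub /trunc.
  case: ifP => _; first by rewrite subrr powR_nrm0 adde0.
  by rewrite powR_nrm0 add0e sub0r subr0 nrmN.
rewrite splitE (splitr eps) EFinD leeD //; last by apply: tail; apply: leq_bigmax.
apply: (small _ (window M)); first by rewrite size_window.
  move=> j; rewrite /inside /trunc; case: ifP => jM; last by rewrite eqxx.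
  by move=> _; apply: mem_window.
move=> j; rewrite /inside /trunc; case: ifP => jM; last by rewrite nrm0 ltW.
rewrite /u /lp_sub jM -nrmN opprB.
have jidx : (absz (j + M%:Z)%R < (M + M).+1)%N.
  by rewrite -ltz_nat abszE ger0_norm; move: jM => /andP[j1 j2]; lia.
suff -> : nth 0%N (nth [::] L i) (absz (j + M%:Z)) = idx (ys i j) by exact: ltW.
rewrite /L (nth_map i) ?size_enum_ord ?ltn_ord // nth_ord_enum.
rewrite (nth_map 0%N) ?size_iota // nth_iota // add0n.
by congr (idx (ys i _)); rewrite abszE ger0_norm; move: jM => /andP[j1 j2]; lia.
Qed.

Lemma pmass_Tpow_growth : exists2 bt : R, 1 <= bt &
  forall i k v, (pmass (iter k (T i) v) <= (bt ^+ k)%:E * pmass v)%E.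
Proof.
have [B B1 wB] := finite_family_bound (F := fun i m => nrm (w i m)) w_bounded.
exists (B `^ p); first by have := ler_powRp ler01 B1; rewrite powR1.
move=> i k v; apply: pmass_iter_pshift_le (wB i); [exact: (fgK i).1 | exact: (fgK i).2 | lra].
Qed.

Section Construction.
Variable bt : R.
Hypothesis bt_ge1 : 1 <= bt.
Hypothesis pmass_Tpow_le :
  forall i k v, (pmass (iter k (T i) v) <= (bt ^+ k)%:E * pmass v)%E.

(* With tolerance 4^-r at stage r, every piece s != r contributes at most
   2^-r 2^-s to the approximation error at stage r. *)
Definition tol (r : nat) : R := 2^-1 ^+ (r + r).

Lemma tol_gt0 r : 0 < tol r.
Proof. by rewrite exprn_gt0 // invr_gt0. Qed.

Lemma tol_le_half_pow r s : (s <= r)%N -> tol r <= 2^-1 ^+ r * 2^-1 ^+ s.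
Proof.
move=> sr; rewrite /tol exprD ler_wpM2l ?exprn_ge0 ?invr_ge0 //.
by apply: ler_wiXn2l => //; rewrite ?invr_ge0 ?invf_le1 ?ler1n.
Qed.

(* [prev s] is the stage already chosen for the piece s < r; at r = 0 the
   conditions on the junk value [prev r.-1] are harmless extra constraints. *)
Definition stage_spec (r : nat) (prev : nat -> nat) (k : nat) : Prop :=
  [/\ (prev r.-1 < k)%N,
      ((bt ^+ n (prev r.-1))%:E * pmass (Smap k (target r)) <= (tol r)%:E)%E,
      forall i, (pmass (lp_sub (iter (n k) (T i) (Smap k (target r))) (target r i))
                 <= (tol r)%:E)%E,
      forall s j, (s < r)%N -> Smap k (target r) j != 0 ->
        j \notin Smap_support (prev s) (target_radius s) &
      forall s i, (s < r)%N ->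
        (pmass (iter (n k) (T i) (Smap (prev s) (target s))) <= (tol r)%:E)%E].

Lemma stage_spec_ex r prev : exists k, stage_spec r prev k.
Proof.
set b := bt ^+ n (prev r.-1).
have b1 : 1 <= b by rewrite exprn_ege1.
have d0 : 0 < tol r / b by rewrite divr_gt0 ?tol_gt0 // (lt_le_trans ltr01).
have avoid_ev : \forall k \near \oo,
   forall i m, m \in window (target_radius r) -> forall s, s \in iota 0 r ->
     forall t, t \in Smap_support (prev s) (target_radius s) -> iter (n k) (f i) m != t.
  apply: filter_forall => i; apply: filter_forall_in => m _.
  apply: filter_forall_in => s _; apply: filter_forall_in => t _.
  exact: near_iter_neq.
have earlier_ev : \forall k \near \oo, forall s, s \in iota 0 r -> forall i,
     (pmass (iter (n k) (T i) (Smap (prev s) (target s))) <= (tol r)%:E)%E.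
  apply: filter_forall_in => s _; apply: filter_forall => i.
  apply: pmass_Tpow_small (tol_gt0 r).
  by apply: finsupp_Smap => i'; exists (target_radius s); apply: target_supp.
have [K1 _ late] := filterI (nbhs_infty_gt (prev r.-1)) (filterI avoid_ev earlier_ev).
have [k [/late[prev_k [avoid earlier]] S_small approx]] :=
  Smap_approx K1 (@target_supp r) d0.
exists k; split => //.
- rewrite -[tol r](@divfK _ b) ?gt_eqF ?(lt_le_trans ltr01) // mulrC EFinM.
  by apply: lee_wpmul2l => //; rewrite lee_fin (le_trans ler01).
- move=> i; apply: (le_trans (approx i)).
  by rewrite lee_fin ler_pdivrMr ?(lt_le_trans ltr01) // ler_peMr // ltW ?tol_gt0.
- move=> s j sr /(Smap_supp (@target_supp r)) /flatten_mapP[i _ /mapP[m mW ->]].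
  by apply/negP => /(avoid i m mW s); rewrite mem_iota sr => /(_ isT) /negP.
- by move=> s i sr; apply: earlier; rewrite mem_iota.
Qed.

Definition next_stage r prev := xget 0%N [set k | stage_spec r prev k].

Fixpoint stages r : seq nat :=
  if r is r'.+1 then rcons (stages r') (next_stage r' (nth 0%N (stages r'))) else [::].

Definition kstage r := next_stage r (nth 0%N (stages r)).

Lemma stagesE r : stages r = map kstage (iota 0 r).
Proof.
elim: r => // r IH; rewrite [LHS]/= -/(kstage r) IH -cats1.
by rewrite -[in RHS]addn1 iotaD map_cat.
Qed.

Lemma nth_stages r s : (s < r)%N -> nth 0%N (stages r) s = kstage s.
Proof. by move=> sr; rewrite stagesE (nth_map 0%N) ?size_iota // nth_iota. Qed.

Lemma kstage_spec r : stage_spec r (nth 0%N (stages r)) (kstage r).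
Proof. by apply: xgetPex; apply: stage_spec_ex. Qed.

Definition piece r := Smap (kstage r) (target r).

Lemma kstage_lt r : (kstage r < kstage r.+1)%N.
Proof. by have [+ _ _ _ _] := kstage_spec r.+1; rewrite nth_stages. Qed.

Lemma kstage_mono : {homo kstage : r s / (r <= s)%N}.
Proof. exact: homo_leq leqnn leq_trans (fun r => ltnW (kstage_lt r)). Qed.

Lemma pmass_piece_succ_le r :
  ((bt ^+ n (kstage r))%:E * pmass (piece r.+1) <= (tol r.+1)%:E)%E.
Proof. by have [_ + _ _ _] := kstage_spec r.+1; rewrite nth_stages. Qed.

Lemma pmass_piece_le r : (pmass (piece r) <= (2^-1 ^+ r)%:E)%E.
Proof.
have [_ scaled _ _ _] := kstage_spec r.
apply: le_trans (le_trans scaled _).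
  rewrite -{1}[pmass _]mul1e lee_wpmul2r ?pmass_ge0 // lee_fin exprn_ege1 //.
by rewrite lee_fin (le_trans (tol_le_half_pow (leq0n r))) // expr0 mulr1.
Qed.

Lemma piece_approx r i :
  (pmass (lp_sub (iter (n (kstage r)) (T i) (piece r)) (target r i)) <= (tol r)%:E)%E.
Proof. by have [_ _ + _ _] := kstage_spec r. Qed.

Lemma piece_disjoint s r j : (s < r)%N -> piece s j != 0 -> piece r j = 0.
Proof.
move=> sr /(Smap_supp (@target_supp s)) js; have [_ _ _ disj _] := kstage_spec r.
by apply/eqP; apply: contraTT js => /(disj s j sr); rewrite nth_stages.
Qed.

Lemma pmass_Tpow_earlier_piece s r i : (s < r)%N ->
  (pmass (iter (n (kstage r)) (T i) (piece s)) <= (tol r)%:E)%E.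
Proof. by move=> sr; have [_ _ _ _ /(_ s i sr)] := kstage_spec r; rewrite nth_stages. Qed.

(* The pieces have disjoint supports; off all of them, xget defaults to 0 and
   piece 0 vanishes there. *)
Definition hc_vector : int -> K := fun j => piece (xget 0%N [set s | piece s j != 0]) j.

Lemma hc_vectorE j s : piece s j != 0 -> hc_vector j = piece s j.
Proof.
move=> sj; have := xgetPex 0%N (ex_intro (fun s => piece s j != 0) s sj).
rewrite /hc_vector; set s' := xget _ _ => s'j.
have [lt|lt|-> //] := ltngtP s s'.
  by move: s'j; rewrite (piece_disjoint lt sj) eqxx.
by move: sj; rewrite (piece_disjoint lt s'j) eqxx.
Qed.

Lemma hc_vector_sub_piece r j : hc_vector j - piece r j = 0 \/
  exists2 s, s != r & hc_vector j - piece r j = piece s j.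
Proof.
have [[s sj]|none] := pselect (exists s, piece s j != 0); last first.
  have piece0 s : piece s j = 0 by apply/eqP; apply: contra_notT none => sj; exists s.
  by left; rewrite /hc_vector !piece0 subrr.
rewrite (hc_vectorE sj); have [->|sr] := eqVneq s r; first by left; rewrite subrr.
have rj0 : piece r j = 0.
  have [lt|lt|sr_eq] := ltngtP s r; first exact: piece_disjoint lt sj.
    by apply/eqP; apply: contraTT sj => /(piece_disjoint lt) ->; rewrite eqxx.
  by move: sr; rewrite sr_eq eqxx.
by right; exists s; rewrite // rj0 subr0.
Qed.

Lemma hc_vector_lp : lp_mem nrm p hc_vector.
Proof.
rewrite /lp_mem -/(pmass hc_vector); apply: (@le_lt_trans _ _
  (\esum_(j in [set: int]) \esum_(s in [set: nat]) ((nrm (piece s j)) `^ p)%:E)).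
  apply: le_esum => j _.
  have [[s sj]|none] := pselect (exists s, piece s j != 0).
    by rewrite (hc_vectorE sj); apply: le_term_esum => s'; apply: powR_nrm_ge0.
  have piece0 s : piece s j = 0 by apply/eqP; apply: contra_notT none => sj; exists s.
  by rewrite /hc_vector piece0 powR_nrm0; apply: esum_ge0 => s _; apply: powR_nrm_ge0.
rewrite exchange_esum; last by move=> j s; apply: powR_nrm_ge0.
apply: (@le_lt_trans _ _ (\esum_(s in [set: nat]) (1 * 2^-1 ^+ s)%:E)).
  by apply: le_esum => s _; rewrite mul1r; apply: pmass_piece_le.
exact: le_lt_trans (esum_geometric_le ler01) (ltry _).
Qed.

Lemma pmass_Tpow_other_piece r s i : s != r ->
  (pmass (iter (n (kstage r)) (T i) (piece s)) <= (2^-1 ^+ r * 2^-1 ^+ s)%:E)%E.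
Proof.
have [sr _|rs _|-> /eqP//] := ltngtP s r.
  apply: (le_trans (pmass_Tpow_earlier_piece i sr)).
  by rewrite lee_fin tol_le_half_pow // ltnW.
case: s rs => [//|s] rs; apply: (le_trans (pmass_Tpow_le _ _ _)).
apply: le_trans (le_trans _ (pmass_piece_succ_le s)) _.
  apply: lee_wpmul2r; first exact: pmass_ge0.
  rewrite lee_fin ler_weXn2l //.
  exact/n_homo/kstage_mono.
by rewrite lee_fin mulrC tol_le_half_pow // ltnW.
Qed.

Lemma hc_error_le r i :
  (pmass (lp_sub (iter (n (kstage r)) (T i) hc_vector) (target r i)) <=
   (2 `^ p * (tol r + 2 * 2^-1 ^+ r))%:E)%E.
Proof.
set m := n (kstage r).
set V := lp_sub (iter m (T i) (piece r)) (target r i).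
pose rest j := \esum_(s in [set: nat])
  (if s != r then ((nrm (iter m (T i) (piece s) j)) `^ p)%:E else 0%E).
have rest_ge0 s j : (0 <= if s != r then ((nrm (iter m (T i) (piece s) j)) `^ p)%:E
                          else 0%E)%E.
  by case: ifP => _ //; exact: powR_nrm_ge0.
apply: (le_trans (pmass_split_le (a := fun j => ((nrm (V j)) `^ p)%:E) (b := rest)
  (fun j => powR_nrm_ge0 _) (fun j => esum_ge0 (fun s _ => rest_ge0 s j)) _)).
  move=> j; set t := iter m (f i) j.
  have -> : lp_sub (iter m (T i) hc_vector) (target r i) j =
      V j + Wfwd (f i) (w i) j m * (hc_vector t - piece r t).
    by rewrite /V /lp_sub !iter_pshiftE; ring.
  apply: le_trans (_ : ((2 `^ p) * ((nrm (V j)) `^ p +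
      (nrm (Wfwd (f i) (w i) j m * (hc_vector t - piece r t))) `^ p))%:E <= _)%E.
    by rewrite lee_fin powR_nrmD_le.
  rewrite EFinM EFinD; apply: lee_wpmul2l; first by rewrite lee_fin powR_ge0.
  rewrite leeD2l //.
  have [->|[s sr ->]] := hc_vector_sub_piece r t.
    by rewrite mulr0 powR_nrm0; exact: esum_ge0 (fun s _ => rest_ge0 s j).
  apply: (le_trans _ (le_term_esum s (fun s => rest_ge0 s j))).
  by rewrite ifT // iter_pshiftE.
rewrite EFinM lee_wpmul2l ?lee_fin ?powR_ge0 // EFinD leeD //; first exact: piece_approx.
rewrite /rest exchange_esum //; apply: le_trans (esum_geometric_le (exprn_ge0 r _)).
  apply: le_esum => s _; have [->|sr] := eqVneq s r.
    by rewrite esum1 // lee_fin mulr_ge0 // exprn_ge0 // invr_ge0.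
  exact: pmass_Tpow_other_piece.
by rewrite invr_ge0.
Qed.

Lemma hc_error_small e : 0 < e ->
  exists r0, forall r, (r0 <= r)%N -> 2 `^ p * (tol r + 2 * 2^-1 ^+ r) <= e.
Proof.
move=> e0; have C0 : 0 < 2 `^ p :> R by rewrite powR_gt0.
have half_lt1 : `|2^-1| < 1 :> R by rewrite ger0_norm ?invr_ge0 // invf_lt1 ?ltr1n.
have e3 : 0 < e / (3 * 2 `^ p) by rewrite divr_gt0 // mulr_gt0.
have [r0 _ small] := cvgr0_norm_le _ (cvg_expr half_lt1) _ e3.
exists r0 => r /small /=; rewrite ger0_norm ?exprn_ge0 ?invr_ge0 // => le_pow.
have := tol_le_half_pow (leq0n r); rewrite expr0 mulr1 => le_tol.
have e3E : 3 * (e / (3 * 2 `^ p)) = e / 2 `^ p by field; rewrite gt_eqF.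
by rewrite mulrC -ler_pdivlMr //; lra.
Qed.

End Construction.

Theorem pshift_dHC : dHC nrm p T.
Proof.
have [bt bt1 pmass_Tpow_le] := pmass_Tpow_growth.
split => //; split.
  by move=> i; apply: pshift_lp_operator (w_bounded i); [exact: (fgK i).1 | exact: (fgK i).2].
exists (hc_vector bt); split; first exact: hc_vector_lp.
move=> ys ys_lp e e0; have [d d0 small] := lp_norm_lt e0.
have C0 : 0 < 2 `^ p :> R by rewrite powR_gt0.
have d1_0 : 0 < d / (2 * 2 `^ p) by rewrite divr_gt0 // mulr_gt0.
have [r0 err_small] := hc_error_small d1_0.
have [r [r0r target_close]] := target_dense ys_lp d1_0 r0.
exists (n (kstage bt r)) => i; apply: small.
apply: (le_trans (pmassD_le (a := lp_sub (iter (n (kstage bt r)) (T i) (hc_vector bt))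
  (target r i)) (b := lp_sub (target r i) (ys i)) _)).
  by move=> j; rewrite /lp_sub addrA subrK.
have -> : d = 2 `^ p * (d / (2 * 2 `^ p) + d / (2 * 2 `^ p)) by field; rewrite gt_eqF.
rewrite EFinM EFinD; apply: lee_wpmul2l; first by rewrite lee_fin ltW.
apply: leeD (target_close i); apply: (le_trans (hc_error_le bt1 pmass_Tpow_le r i)).
by rewrite lee_fin; apply: err_small.
Qed.

End Criterion.
End Lp.

(** * Real and complex scalars *)

Theorem theorem2p4_for_absolute_value (R : realType) (K : fieldType) (nrm : K -> R) :
  nrm 0 = 0 -> (forall x, 0 <= nrm x) -> (forall x, nrm x = 0 -> x = 0) ->
  (forall x y, nrm (x * y) = nrm x * nrm y) -> (forall x y, nrm (x + y) <= nrm x + nrm y) ->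
  (forall x, nrm (- x) = nrm x) -> (forall e, 0 < e -> exists2 z, z != 0 & nrm z < e) ->
  (exists c : nat -> K, forall z e, 0 < e -> exists t, nrm (z - c t) < e) ->
  theorem2p4_for nrm.
Proof.
move=> nrm0 nrm_ge0 nrm_eq0 nrmM nrmD nrmN nrm_small [c c_dense].
move=> p N f g w n p1 N2 fgK w_bounded w_neq0 n_gt0 n_lt W_blowup W_collapse ratio.
have p0 : 0 < p by apply: lt_le_trans ltr01 p1.
have N_ge2 : (2 <= N)%N by apply: ltnW.
by split; [apply: pshift_dBUC | apply: pshift_dHC c_dense].
Qed.

Lemma theorem2p4_real (R : realType) : theorem2p4_for (fun x : R => `|x|).
Proof.
apply: theorem2p4_for_absolute_value.
- exact: normr0.
- exact: normr_ge0.
- by move=> x /normr0_eq0.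
- exact: normrM.
- exact: ler_normD.
- exact: normrN.
- move=> e e0; exists (e / 2); first by rewrite gt_eqF // divr_gt0.
  by rewrite ger0_norm ?divr_ge0 ?ltW //; lra.
exists (fun t => if unpickle t is Some q then ratr q else 0) => z e e0.
have [q] : exists q : rat, ratr q \in `]z - e, z + e[ by apply: rat_in_itvoo; lra.
rewrite in_itv /= => /andP[zq qz]; exists (pickle q).
by rewrite pickleK ltr_norml; apply/andP; split; lra.
Qed.

Lemma theorem2p4_complex (R : realType) :
  theorem2p4_for (@ComplexField.Normc.normc R).
Proof.
apply: theorem2p4_for_absolute_value.
- exact: ComplexField.Normc.normc0.
- by move=> [a b]; apply: sqrtr_ge0.
- exact: ComplexField.Normc.eq0_normc.
- exact: ComplexField.Normc.normcM.
- exact: le_normcD.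
- exact: normcN.
- move=> e e0; exists ((e / 2) +i* 0)%C.
    by apply/eqP => -[]; apply/eqP; rewrite gt_eqF // divr_gt0.
  rewrite /ComplexField.Normc.normc /= expr0n addr0 sqrtr_sqr.
  by rewrite ger0_norm ?divr_ge0 ?ltW //; lra.
exists (fun t => if unpickle t is Some (a, b) then (ratr a +i* ratr b)%C else 0).
move=> [x y] e e0.
have [qa] : exists q : rat, ratr q \in `]x - e / 2, x + e / 2[ by apply: rat_in_itvoo; lra.
have [qb] : exists q : rat, ratr q \in `]y - e / 2, y + e / 2[ by apply: rat_in_itvoo; lra.
rewrite !in_itv /= => /andP[yb by_] /andP[xa ax]; exists (pickle (qa, qb)).
rewrite pickleK /ComplexField.Normc.normc /=.
set u := x - ratr qa; set v := y - ratr qb.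
have u_small : `|u| < e / 2 by rewrite ltr_norml; apply/andP; split; rewrite /u; lra.
have v_small : `|v| < e / 2 by rewrite ltr_norml; apply/andP; split; rewrite /v; lra.
apply: (le_lt_trans (y := Num.sqrt ((`|u| + `|v|) ^+ 2))).
  apply: ler_wsqrtr; rewrite -(real_normK (num_real u)) -(real_normK (num_real v)).
  have := normr_ge0 u; have := normr_ge0 v; nra.
by rewrite sqrtr_sqr ger0_norm ?addr_ge0 //; lra.
Qed.

Theorem theorem2p4 (R : realType) :
  theorem2p4_for (fun x : R => `|x|%R) /\ theorem2p4_for (@ComplexField.Normc.normc R).
Proof. by split; [apply: theorem2p4_real | apply: theorem2p4_complex]. Qed.
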